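(* Let $T_{init}$ be the number of nodes of the initial tree. The expected optimization time of SMO-GP-single and of SMO-GP-multi on MO-MAJORITY is $O(n\,T_{init}+n^2\log n)$.
   Context: Fix an integer $n\ge 1$; the terminal set is $T=\{x_1,\bar x_1,\dots,x_n,\bar x_n\}$ ($\bar x_i$ the complement of $x_i$). A syntax tree is either the empty tree or a rooted ordered binary tree whose inner nodes are all labelled by the binary function $J$ (join, exactly two ordered children) and whose leaves are labelled by elements of $T$. The complexity $C(X)$ is the number of nodes of $X$ (0 for the empty tree). The leaf list $l$ of $X$ is the sequence of leaf labels in inorder. MAJORITY$(X)$ is the number of indices $i$ such that $x_i$ occurs in $l$ at least once and at least as often as $\bar x_i$. MO-MAJORITY$(X)=(\mathrm{MAJORITY}(X),C(X))$, MAJORITY maximized, $C$ minimized. Mutation (HVL-Prime applied $k$ times): each application chooses uniformly at random one of three operations. Substitute: replace a uniformly random leaf by a uniformly random $u\in T$. Insert: choose a uniformly random node $v$ and uniformly random $u\in T$, replace $v$ by a $J$-node with children $u$ and $v$ in uniformly random order (inserting into the empty tree yields the single leaf $u$). Delete: choose a uniformly random leaf $v$ with parent $p$ and sibling $u$, replace $p$ by $u$ (deleting $p$ and $v$; deleting the only leaf of a one-leaf tree yields the empty tree). For single-operation mutation $k=1$; for multi-operation mutation $k=1+\mathrm{Pois}(1)$ with $\mathrm{Pois}(1)$ Poisson with mean 1. Dominance for MO-$F$: $Y\succeq X$ iff $F(Y)\ge F(X)$ and $C(Y)\le C(X)$; $Y\succ X$ iff $Y\succeq X$ and ($F(Y)>F(X)$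 or $C(Y)<C(X)$). A tree is Pareto optimal if no tree dominates it; the Pareto front is the set of objective vectors of Pareto optimal trees. SMO-GP: choose an initial tree $X$ and set $P:=\{X\}$; repeat: choose $X\in P$ uniformly at random, let $Y$ be a mutated copy of $X$; if no $Z\in P$ satisfies $Z\succ Y$, set $P:=(P\setminus\{Z\in P: Y\succeq Z\})\cup\{Y\}$. SMO-GP-single uses single-operation, SMO-GP-multi multi-operation mutation. Expected optimization time: expected number of iterations until the population contains, for every objective vector in the Pareto front, a tree with that objective vector. *)

From Stdlib Require Import Bool Reals List Arith ClassicalEpsilon.
Import ListNotations.
Open Scope R_scope.
Open Scope bool_scope.

(** Literals: [Lit i true] is x_i, [Lit i false] is the complement of x_i;
    variables are numbered 1..n. *)
Record lit := Lit { var : nat; pos : bool }.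

Inductive tree := Leaf (l : lit) | Join (a b : tree).

(** A syntax tree: [None] is the empty tree. *)
Definition stree := option tree.

Fixpoint size_t (t : tree) : nat :=
  match t with Leaf _ => 1%nat | Join a b => S (size_t a + size_t b) end.

Definition complexity (X : stree) : nat := match X with None => 0%nat | Some t => size_t t end.

Fixpoint leaves (t : tree) : list lit :=
  match t with Leaf l => [l] | Join a b => leaves a ++ leaves b end.

Definition leaf_list (X : stree) : list lit :=
  match X with None => [] | Some t => leaves t end.

Fixpoint nleaves (t : tree) : nat :=
  match t with Leaf _ => 1%nat | Join a b => (nleaves a + nleaves b)%nat end.

Definition Tset (n : nat) : list lit :=
  flat_map (fun i => [Lit i true; Lit i false]) (seq 1 n).

Definition wf (n : nat) (X : stree) : Prop :=
  Forall (fun l => (1 <= var l <= n)%nat) (leaf_list X).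

Definition count_lit (i : nat) (b : bool) (l : list lit) : nat :=
  length (filter (fun x => andb (Nat.eqb (var x) i) (Bool.eqb (pos x) b)) l).

Definition MAJORITY (n : nat) (X : stree) : nat :=
  let l := leaf_list X in
  length (filter (fun i => (Nat.leb 1 (count_lit i true l)
                            && Nat.leb (count_lit i false l) (count_lit i true l))%bool)
                 (seq 1 n)).

Definition wdom (n : nat) (Y X : stree) : bool :=
  (Nat.leb (MAJORITY n X) (MAJORITY n Y) && Nat.leb (complexity Y) (complexity X))%bool.
Definition sdom (n : nat) (Y X : stree) : bool :=
  (wdom n Y X && (Nat.ltb (MAJORITY n X) (MAJORITY n Y) || Nat.ltb (complexity Y) (complexity X)))%bool.

Definition pareto_opt (n : nat) (Y : stree) : Prop :=
  ~ exists Z, wf n Z /\ sdom n Z Y = true.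

Definition covers_front (n : nat) (P : list stree) : Prop :=
  forall Y, wf n Y -> pareto_opt n Y ->
    exists Z, In Z P /\ MAJORITY n Z = MAJORITY n Y /\ complexity Z = complexity Y.

Definition covers_frontb (n : nat) (P : list stree) : bool :=
  if excluded_middle_informative (covers_front n P) then true else false.

Definition dist (A : Type) := list (R * A).
Definition ret {A} (a : A) : dist A := [(1, a)].
Definition uniform {A} (l : list A) : dist A :=
  map (fun x => (/ INR (length l), x)) l.
Definition bind {A B} (d : dist A) (f : A -> dist B) : dist B :=
  flat_map (fun wa => map (fun wb => (fst wa * fst wb, snd wb)) (f (snd wa))) d.
Definition scale {A} (c : R) (d : dist A) : dist A :=
  map (fun wa => (c * fst wa, snd wa)) d.
Definition expect {A} (d : dist A) (f : A -> R) : R :=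
  fold_right (fun wa acc => fst wa * f (snd wa) + acc) 0 d.

(** replace the i-th leaf (inorder, 0-based) by u *)
Fixpoint subst_at (t : tree) (i : nat) (u : lit) : tree :=
  match t with
  | Leaf _ => Leaf u
  | Join a b => if Nat.ltb i (nleaves a) then Join (subst_at a i u) b
                else Join a (subst_at b (i - nleaves a) u)
  end.

(** replace the i-th node (preorder, 0-based) v by J(u,v) if [ul], else J(v,u) *)
Fixpoint insert_at (t : tree) (i : nat) (u : lit) (ul : bool) : tree :=
  match i with
  | O => if ul then Join (Leaf u) t else Join t (Leaf u)
  | S j => match t with
           | Leaf _ => t
           | Join a b => if Nat.ltb j (size_t a) then Join (insert_at a j u ul) b
                         else Join a (insert_at b (j - size_t a) u ul)
           end
  end.

(** delete the i-th leaf (inorder): its parent is replaced by its sibling;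
    deleting the only leaf yields the empty tree *)
Fixpoint delete_at (t : tree) (i : nat) : stree :=
  match t with
  | Leaf _ => None
  | Join a b =>
      if Nat.ltb i (nleaves a) then
        match delete_at a i with None => Some b | Some a' => Some (Join a' b) end
      else
        match delete_at b (i - nleaves a) with None => Some a | Some b' => Some (Join a b') end
  end.

Definition op_subst (n : nat) (X : stree) : dist stree :=
  match X with
  | None => ret None
  | Some t => bind (uniform (seq 0 (nleaves t))) (fun i =>
              bind (uniform (Tset n)) (fun u => ret (Some (subst_at t i u))))
  end.

Definition op_insert (n : nat) (X : stree) : dist stree :=
  match X with
  | None => bind (uniform (Tset n)) (fun u => ret (Some (Leaf u)))
  | Some t => bind (uniform (seq 0 (size_t t))) (fun i =>
              bind (uniform (Tset n)) (fun u =>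
              bind (uniform [true; false]) (fun ul => ret (Some (insert_at t i u ul)))))
  end.

Definition op_delete (X : stree) : dist stree :=
  match X with
  | None => ret None
  | Some t => bind (uniform (seq 0 (nleaves t))) (fun i => ret (delete_at t i))
  end.

Definition hvl (n : nat) (X : stree) : dist stree :=
  scale (/ 3) (op_subst n X) ++ scale (/ 3) (op_insert n X) ++ scale (/ 3) (op_delete X).

Fixpoint hvl_iter (n k : nat) (X : stree) : dist stree :=
  match k with O => ret X | S k' => bind (hvl n X) (hvl_iter n k') end.

Definition mut_single (n : nat) : stree -> dist stree := hvl n.

(** Multi-operation mutation, truncated to Pois(1) values < K
    (the mass of the event Pois(1) >= K is dropped). *)
Definition mut_multi_trunc (n K : nat) (X : stree) : dist stree :=
  flat_map (fun j => scale (exp (-1) / INR (fact j)) (hvl_iter n (S j) X)) (seq 0 K).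

Definition update (n : nat) (P : list stree) (Y : stree) : list stree :=
  if existsb (fun Z => sdom n Z Y) P then P
  else Y :: filter (fun Z => negb (wdom n Y Z)) P.

(** [not_done mut n t P] = probability that, starting from population P,
    the populations after 0,1,...,t iterations all fail to cover the
    Pareto front (i.e. P(T > t) where T is the optimization time),
    for mutation kernel [mut].  For a truncated kernel this is the
    probability of that event intersected with "no truncated value was drawn". *)
Fixpoint not_done (mut : stree -> dist stree) (n t : nat) (P : list stree) : R :=
  if covers_frontb n P then 0
  else match t with
       | O => 1
       | S t' => expect (bind (uniform P) mut) (fun Y => not_done mut n t' (update n P Y))
       end.

Definition sumR (N : nat) (f : nat -> R) : R :=
  fold_right (fun t acc => f t + acc) 0 (seq 0 N).

(* The proof is an additive drift argument on an explicit potential.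
   - Pareto optimal trees have objective vector (k, 2k-1) for some
     0 <= k <= n ([pareto_opt_on_front]; for k = 0 this is the empty tree,
     since 2*0-1 = 0 in nat), so an uncovered front leaves one of these
     vectors missing ([missing_front_vector]).
   - Every population of SMO-GP holds at most one tree per MAJORITY value,
     hence at most n+1 trees ([Inv], [Inv_length]).
   - The potential g(P) = A * cmin(P) + sum of w_j over the uncovered front
     vectors (k = j >= 1), with A = 3e(n+1) and w_j = 6e n(n+1)/(n+1-j),
     never increases, and while the front is not covered it drops by at
     least 1 in expectation in one iteration ([potential_drift]): if
     cmin(P) > 0, deleting a leaf of a tree of minimal complexity lowers
     cmin; otherwise some front vector (j-1, 2j-3) is covered while (j, 2j-1)
     is not, and inserting one of the >= n+1-j fresh positive literals into
     the covering tree produces it.  These bounds only use that mutation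
     performs one HVL-Prime step with probability >= 1/e, which holds for
     both mutation operators ([admissible]).
   - Additive drift turns this into sum_t P(T > t) <= g(P0) ([drift_bound]),
     and g({X0}) <= 200 (n C(X0) + n^2 ln n) by the harmonic bound
     H_n <= 1 + ln n ([potential_initial_bound]). *)

From Pilot Require Import Defs.
From Stdlib Require Import Reals List Arith ClassicalEpsilon Lia Lra Permutation Classical.
Import ListNotations.
Open Scope R_scope.

(** * Finite subdistributions *)

Definition nnd {A} (d : Defs.dist A) : Prop := Forall (fun wa => 0 <= fst wa) d.
Definition mass {A} (d : Defs.dist A) : R := expect d (fun _ => 1).
Definition sumf {A} (l : list A) (f : A -> R) : R := fold_right (fun x acc => f x + acc) 0 l.

Lemma expect_app {A} (d1 d2 : Defs.dist A) f : expect (d1 ++ d2) f = expect d1 f + expect d2 f.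
Proof. induction d1 as [|[w a] d IH]; simpl; [lra|rewrite IH; lra]. Qed.

Lemma expect_scale {A} c (d : Defs.dist A) f : expect (scale c d) f = c * expect d f.
Proof. induction d as [|[w a] d IH]; simpl in *; [lra|rewrite IH; lra]. Qed.

Lemma expect_bind {A B} (d : Defs.dist A) (k : A -> Defs.dist B) f :
  expect (bind d k) f = expect d (fun a => expect (k a) f).
Proof.
  assert (Hw : forall w (d' : Defs.dist B),
            expect (map (fun wb => (w * fst wb, snd wb)) d') f = w * expect d' f).
  { intros w d'; induction d' as [|[v b] d' IH]; simpl in *; [lra|rewrite IH; lra]. }
  induction d as [|[w a] d IH]; simpl; [lra|].
  rewrite expect_app, Hw, IH. simpl. lra.
Qed.

Lemma expect_ret {A} (a : A) f : expect (ret a) f = f a.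
Proof. unfold ret; simpl; lra. Qed.

Lemma expect_uniform {A} (l : list A) f : expect (uniform l) f = / INR (length l) * sumf l f.
Proof.
  unfold uniform. generalize (/ INR (length l)). intro c.
  induction l as [|x l IH]; simpl; [lra|]. rewrite IH. simpl. lra.
Qed.

Lemma expect_flat_map {A B} (F : A -> Defs.dist B) s f :
  expect (flat_map F s) f = sumf s (fun j => expect (F j) f).
Proof. induction s; simpl; auto. rewrite expect_app, IHs; auto. Qed.

Lemma expect_ext {A} (d : Defs.dist A) f g : (forall a, f a = g a) -> expect d f = expect d g.
Proof. intro H; induction d as [|[w a] d IH]; simpl; [lra|rewrite IH, H; lra]. Qed.

Lemma expect_mono {A} (d : Defs.dist A) f g :
  nnd d -> (forall a, f a <= g a) -> expect d f <= expect d g.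
Proof.
  intros Hn H; induction d as [|[w a] d IH]; simpl; [lra|].
  inversion Hn; subst. simpl in *. specialize (IH H3). specialize (H a). nra.
Qed.

Lemma expect_zero {A} (d : Defs.dist A) : expect d (fun _ => 0) = 0.
Proof. induction d as [|[w a] d IH]; simpl; [lra|rewrite IH; lra]. Qed.

Lemma expect_nonneg {A} (d : Defs.dist A) f : nnd d -> (forall a, 0 <= f a) -> 0 <= expect d f.
Proof. intros Hn H. rewrite <- (expect_zero d). apply expect_mono; auto. Qed.

Lemma expect_affine {A} (d : Defs.dist A) c e f :
  expect d (fun a => c - e * f a) = c * mass d - e * expect d f.
Proof. unfold mass; induction d as [|[w a] d IH]; simpl; [lra|rewrite IH; simpl; lra]. Qed.

Lemma sumf_expect {A B} (l : list A) (d : Defs.dist B) (F : A -> B -> R) :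
  sumf l (fun t => expect d (F t)) = expect d (fun y => sumf l (fun t => F t y)).
Proof.
  induction l as [|t l IH]; simpl; [symmetry; apply expect_zero|].
  rewrite IH. clear IH. induction d as [|[w a] d IH]; simpl; [lra|rewrite <- IH; lra].
Qed.

Lemma nnd_app {A} (d1 d2 : Defs.dist A) : nnd d1 -> nnd d2 -> nnd (d1 ++ d2).
Proof. intros; apply Forall_app; auto. Qed.

Lemma nnd_scale {A} c (d : Defs.dist A) : 0 <= c -> nnd d -> nnd (scale c d).
Proof.
  intros Hc H; unfold scale, nnd in *; apply Forall_map.
  eapply Forall_impl; [|exact H]. intros [w a]; simpl; nra.
Qed.

Lemma nnd_ret {A} (a : A) : nnd (ret a).
Proof. constructor; simpl; [lra|constructor]. Qed.

Lemma inv_INR_nonneg m : 0 <= / INR m.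
Proof.
  destruct m. rewrite INR_0, Rinv_0; lra.
  left; apply Rinv_0_lt_compat, lt_0_INR; lia.
Qed.

Lemma nnd_uniform {A} (l : list A) : nnd (uniform l).
Proof.
  unfold nnd, uniform. apply Forall_map, Forall_forall. intros. apply inv_INR_nonneg.
Qed.

Lemma nnd_bind {A B} (d : Defs.dist A) (k : A -> Defs.dist B) :
  nnd d -> (forall a, nnd (k a)) -> nnd (bind d k).
Proof.
  intros Hd Hk; induction d as [|[w a] d IH]; simpl; [constructor|].
  inversion Hd; subst. apply Forall_app; split; [|apply IH; auto].
  apply Forall_map. eapply Forall_impl; [|apply (Hk a)]. intros [v b]; simpl in *. nra.
Qed.

Lemma mass_ret {A} (a : A) : mass (ret a) = 1.
Proof. unfold mass; rewrite expect_ret; auto. Qed.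

Lemma mass_uniform {A} (l : list A) : mass (uniform l) <= 1.
Proof.
  unfold mass. rewrite expect_uniform.
  replace (sumf l (fun _ => 1)) with (INR (length l))
    by (induction l; simpl length; [auto|rewrite S_INR; simpl; lra]).
  destruct (length l). rewrite ?INR_0, Rinv_0; lra.
  rewrite Rinv_l; [lra|]. apply not_0_INR; lia.
Qed.

Lemma mass_bind {A B} (d : Defs.dist A) (k : A -> Defs.dist B) :
  nnd d -> mass d <= 1 -> (forall a, mass (k a) <= 1) -> mass (bind d k) <= 1.
Proof.
  intros Hn Hd Hk. unfold mass in *. rewrite expect_bind.
  eapply Rle_trans; [|exact Hd]. apply expect_mono; auto.
Qed.

Lemma uniform_ge_all {A} (l : list A) f c :
  l <> [] -> (forall x, In x l -> c <= f x) -> c <= expect (uniform l) f.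
Proof.
  intros Hl H. rewrite expect_uniform.
  assert (Hs : INR (length l) * c <= sumf l f).
  { clear Hl. induction l as [|x l IH]; simpl length; [rewrite INR_0; simpl; lra|].
    rewrite S_INR. simpl. pose proof (H x (or_introl eq_refl)).
    assert (INR (length l) * c <= sumf l f) by (apply IH; intros; apply H; right; auto).
    lra. }
  destruct l; [congruence|]. simpl length in *.
  assert (0 < INR (S (length l))) by (apply lt_0_INR; lia).
  apply (Rmult_le_reg_l (INR (S (length l)))); auto.
  rewrite <- Rmult_assoc, Rinv_r by lra. lra.
Qed.

Lemma uniform_ge_count {A} (l : list A) (b : A -> bool) f :
  (forall x, 0 <= f x) -> (forall x, b x = true -> 1 <= f x) ->
  INR (length (filter b l)) * / INR (length l) <= expect (uniform l) f.
Proof.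
  intros H0 H1. rewrite expect_uniform.
  assert (Hs : INR (length (filter b l)) <= sumf l f).
  { induction l as [|x l IH]; simpl; [lra|].
    destruct (b x) eqn:E; simpl length;
      [rewrite S_INR; specialize (H1 x E)|specialize (H0 x)]; lra. }
  pose proof (inv_INR_nonneg (length l)). rewrite Rmult_comm. nra.
Qed.

Lemma uniform_ge_one {A} (l : list A) f z m :
  (forall x, 0 <= f x) -> In z l -> (length l <= m)%nat ->
  / INR m * f z <= expect (uniform l) f.
Proof.
  intros H0 Hz Hm. rewrite expect_uniform.
  assert (Hs : f z <= sumf l f).
  { clear Hm. assert (Hnn : forall l', 0 <= sumf l' f)
      by (induction l'; simpl; [lra|specialize (H0 a); lra]).
    induction l as [|x l IH]; [destruct Hz|]. simpl.
    destruct Hz as [->|Hz]; [specialize (Hnn l)|specialize (IH Hz); specialize (H0 x)]; lra. }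
  destruct l; [destruct Hz|]. simpl length in *.
  assert (0 < INR (S (length l))) by (apply lt_0_INR; lia).
  assert (/ INR m <= / INR (S (length l))) by (apply Rinv_le_contravar; auto; apply le_INR; auto).
  pose proof (inv_INR_nonneg m). specialize (H0 z). nra.
Qed.

Lemma sumf_mono {A} (l : list A) f g : (forall x, In x l -> f x <= g x) -> sumf l f <= sumf l g.
Proof.
  induction l as [|x l IH]; intro H; simpl; [lra|].
  assert (f x <= g x) by (apply H; left; auto).
  assert (sumf l f <= sumf l g) by (apply IH; intros; apply H; right; auto). lra.
Qed.

Lemma sumf_nonneg {A} (l : list A) f : (forall x, In x l -> 0 <= f x) -> 0 <= sumf l f.
Proof.
  intro H. replace 0 with (sumf l (fun _ => 0)) by (clear H; induction l; simpl; lra).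
  apply sumf_mono; auto.
Qed.

Lemma sumf_scal {A} (l : list A) c f : sumf l (fun j => c * f j) = c * sumf l f.
Proof. induction l; simpl; [lra|]. rewrite IHl; lra. Qed.

Lemma sumf_app {A} (l1 l2 : list A) f : sumf (l1 ++ l2) f = sumf l1 f + sumf l2 f.
Proof. induction l1; simpl; [lra|]. rewrite IHl1; lra. Qed.

Lemma sumf_map {A B} (h : A -> B) l f : sumf (map h l) f = sumf l (fun x => f (h x)).
Proof. induction l; simpl; auto. rewrite IHl; auto. Qed.

Lemma sumf_drop {A} (l : list A) f g z d : (forall x, In x l -> g x <= f x) -> In z l ->
  g z + d <= f z -> sumf l g + d <= sumf l f.
Proof.
  induction l as [|x l IH]; intros H Hz Hd; [destruct Hz|]. simpl.
  destruct Hz as [->|Hz].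
  - assert (sumf l g <= sumf l f) by (apply sumf_mono; intros; apply H; right; auto). lra.
  - assert (g x <= f x) by (apply H; left; auto).
    assert (sumf l g + d <= sumf l f) by (apply IH; auto; intros; apply H; right; auto). lra.
Qed.

Lemma sumf_ext {A} (l : list A) f g : (forall x, f x = g x) -> sumf l f = sumf l g.
Proof. intro H. induction l; simpl; auto. rewrite IHl, H; auto. Qed.

Lemma sumf_zero {A} (l : list A) : sumf l (fun _ => 0) = 0.
Proof. induction l; simpl; [auto|rewrite IHl; lra]. Qed.

(** * Combinatorics of MAJORITY *)

Section Majority.
Local Open Scope nat_scope.

Definition majp (l : list lit) (i : nat) : bool :=
  (Nat.leb 1 (count_lit i true l) && Nat.leb (count_lit i false l) (count_lit i true l))%bool.
Definition MAJl (n : nat) (l : list lit) : nat := length (filter (majp l) (seq 1 n)).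

Lemma MAJORITY_leaf_list n X : MAJORITY n X = MAJl n (leaf_list X).
Proof. reflexivity. Qed.

Lemma count_cons i b u l : count_lit i b (u :: l) =
  (if (Nat.eqb (var u) i && Bool.eqb (Defs.pos u) b)%bool then 1 else 0) + count_lit i b l.
Proof. unfold count_lit; simpl. destruct (_ && _)%bool; reflexivity. Qed.

Lemma count_perm i b l1 l2 : Permutation l1 l2 -> count_lit i b l1 = count_lit i b l2.
Proof.
  induction 1; rewrite ?count_cons; auto.
  - destruct (_ && _)%bool; destruct (_ && _)%bool; lia.
  - congruence.
Qed.

Lemma MAJl_perm n l1 l2 : Permutation l1 l2 -> MAJl n l1 = MAJl n l2.
Proof.
  intro H. unfold MAJl. f_equal. apply filter_ext. intro i. unfold majp.
  rewrite !(count_perm i _ l1 l2 H). auto.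
Qed.

Lemma MAJORITY_le_n n X : MAJORITY n X <= n.
Proof. unfold MAJORITY. rewrite <- (length_seq n 1) at 2. apply filter_length_le. Qed.

(** Each variable counted by MAJORITY occurs as a leaf, so MAJORITY <= #leaves. *)
Lemma MAJl_le_length n l : MAJl n l <= length l.
Proof.
  unfold MAJl. rewrite <- (length_map var l).
  apply NoDup_incl_length; [apply NoDup_filter, seq_NoDup|].
  intros i Hi. apply filter_In in Hi as [_ Hi]. unfold majp in Hi.
  apply andb_prop in Hi as [Hi _]. apply Nat.leb_le in Hi.
  revert Hi. unfold count_lit. induction l as [|x l IH]; simpl; [lia|].
  destruct (Nat.eqb (var x) i && Bool.eqb (Defs.pos x) true)%bool eqn:E; simpl.
  - apply andb_prop in E as [E _]. apply Nat.eqb_eq in E. auto.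
  - intro; right; auto.
Qed.

Lemma size_leaves t : size_t t + 1 = 2 * length (leaves t).
Proof. induction t; simpl; auto. rewrite length_app. lia. Qed.

Lemma nleaves_pos t : 1 <= nleaves t.
Proof. induction t; simpl; lia. Qed.

Lemma MAJORITY_complexity n X : 2 * MAJORITY n X <= complexity X + 1.
Proof.
  rewrite MAJORITY_leaf_list. pose proof (MAJl_le_length n (leaf_list X)).
  destruct X as [t|]; simpl in *; [pose proof (size_leaves t)|]; lia.
Qed.

Definition fresh (i : nat) (l : list lit) : bool :=
  negb (existsb (fun x => Nat.eqb (var x) i) l).

Lemma count_fresh i b l : fresh i l = true -> count_lit i b l = 0.
Proof.
  unfold fresh, count_lit. induction l as [|x l IH]; simpl; auto.
  intro H. apply Bool.negb_true_iff, Bool.orb_false_iff in H as [H1 H2].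
  rewrite H1. simpl. apply IH. rewrite H2; auto.
Qed.

Lemma fresh_above i l : (forall x, In x l -> var x < i) -> fresh i l = true.
Proof.
  intro H. unfold fresh. apply Bool.negb_true_iff. destruct (existsb _ l) eqn:E; auto.
  apply existsb_exists in E as [x [Hx Hx']]. apply Nat.eqb_eq in Hx'. specialize (H x Hx). lia.
Qed.

Lemma fresh_count n l : n - length l <= length (filter (fun i => fresh i l) (seq 1 n)).
Proof.
  pose proof (filter_length (fun i => negb (fresh i l)) (seq 1 n)) as H.
  rewrite length_seq in H.
  assert (length (filter (fun i => negb (fresh i l)) (seq 1 n)) <= length l).
  { rewrite <- (length_map var l). apply NoDup_incl_length.
    - apply NoDup_filter, seq_NoDup.
    - intros i Hi. apply filter_In in Hi as [_ Hi]. unfold fresh in Hi.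
      rewrite Bool.negb_involutive in Hi. apply existsb_exists in Hi as [x [Hx Hx']].
      apply Nat.eqb_eq in Hx'. subst. apply in_map; auto. }
  rewrite (filter_ext (fun x => negb (negb (fresh x l))) (fun i => fresh i l)) in H;
    [lia|intro; apply Bool.negb_involutive].
Qed.

Lemma filter_length_mono {A} (s : list A) (p q : A -> bool) :
  (forall x, In x s -> p x = true -> q x = true) ->
  length (filter p s) <= length (filter q s).
Proof.
  induction s as [|x s IH]; intro H; simpl; [lia|].
  assert (IH' := IH (fun y Hy => H y (or_intror Hy))).
  destruct (p x) eqn:E1; [rewrite (H x (or_introl eq_refl) E1); simpl; lia|].
  destruct (q x); simpl; lia.
Qed.

Lemma filter_length_incr {A} (s : list A) (p q : A -> bool) i :
  (forall x, In x s -> p x = true -> q x = true) -> In i s -> p i = false -> q i = true ->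
  S (length (filter p s)) <= length (filter q s).
Proof.
  induction s as [|x s IH]; intros Hpq Hi Hp Hq; [destruct Hi|].
  assert (Hpq' : forall y, In y s -> p y = true -> q y = true) by (intros; apply Hpq; simpl; auto).
  simpl. destruct Hi as [->|Hi].
  - rewrite Hp, Hq. simpl. pose proof (filter_length_mono s p q Hpq'). lia.
  - specialize (IH Hpq' Hi Hp Hq).
    destruct (p x) eqn:E1; [rewrite (Hpq x (or_introl eq_refl) E1); simpl; lia|].
    destruct (q x); simpl; lia.
Qed.

Lemma MAJl_add_fresh n i l : 1 <= i <= n -> fresh i l = true ->
  S (MAJl n l) <= MAJl n (Lit i true :: l).
Proof.
  intros Hi Hf. unfold MAJl. apply filter_length_incr with (i := i).
  - intros x _ Hx. unfold majp in *. rewrite !count_cons. cbn [var Defs.pos].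
    apply andb_prop in Hx as [H1 H2]. apply Nat.leb_le in H1, H2.
    apply andb_true_intro; split; apply Nat.leb_le; destruct (Nat.eqb i x); simpl; lia.
  - apply in_seq. lia.
  - unfold majp. rewrite !count_fresh; auto.
  - unfold majp. rewrite !count_cons, !count_fresh by auto. simpl. rewrite Nat.eqb_refl. reflexivity.
Qed.

Lemma delete_smaller t i : complexity (delete_at t i) < size_t t.
Proof.
  revert i; induction t as [l|a IHa b IHb]; intro i; simpl; [lia|].
  destruct (Nat.ltb i (nleaves a)).
  - specialize (IHa i). destruct (delete_at a i); simpl in *; lia.
  - specialize (IHb (i - nleaves a)). destruct (delete_at b _); simpl in *; lia.
Qed.

Lemma insert_spec t i u ul : i < size_t t ->
  size_t (insert_at t i u ul) = size_t t + 2 /\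
  Permutation (leaves (insert_at t i u ul)) (u :: leaves t).
Proof.
  revert i; induction t as [l|a IHa b IHb]; intros i Hi.
  - simpl in Hi. assert (i = 0) by lia. subst.
    destruct ul; simpl; split; try lia; auto using Permutation_sym, Permutation_cons_append.
  - destruct i as [|j].
    + destruct ul; simpl; split; try lia; auto using Permutation_sym, Permutation_cons_append.
    + simpl in Hi |- *. destruct (Nat.ltb j (size_t a)) eqn:E.
      * apply Nat.ltb_lt in E. destruct (IHa j E) as [H1 H2]. simpl. split; [lia|].
        rewrite H2. auto.
      * apply Nat.ltb_ge in E. destruct (IHb (j - size_t a) ltac:(lia)) as [H1 H2].
        simpl. split; [lia|]. rewrite H2. apply Permutation_sym, Permutation_middle.
Qed.

End Majority.

(** * The Pareto front and the population *)

Section Front.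
Local Open Scope nat_scope.

(** The front vector with MAJORITY k has complexity 2k-1 (0 for k = 0). *)
Definition vk (k : nat) : nat := 2 * k - 1.

Definition covb n (P : list stree) k : bool :=
  existsb (fun Z => (Nat.eqb (MAJORITY n Z) k && Nat.eqb (complexity Z) (vk k))%bool) P.

Lemma covb_iff n P k : covb n P k = true <->
  exists Z, In Z P /\ MAJORITY n Z = k /\ complexity Z = vk k.
Proof.
  unfold covb. rewrite existsb_exists. split.
  - intros [Z [H1 H2]]. apply andb_prop in H2 as [H2 H3].
    apply Nat.eqb_eq in H2, H3. eauto.
  - intros [Z [H1 [H2 H3]]]. exists Z; split; auto. rewrite H2, H3, !Nat.eqb_refl; auto.
Qed.

Lemma wdom_iff n Y Z : wdom n Y Z = true <->
  MAJORITY n Z <= MAJORITY n Y /\ complexity Y <= complexity Z.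
Proof. unfold wdom. rewrite Bool.andb_true_iff, !Nat.leb_le. tauto. Qed.

Lemma sdom_iff n Y Z : sdom n Y Z = true <->
  (MAJORITY n Z <= MAJORITY n Y /\ complexity Y <= complexity Z) /\
  (MAJORITY n Z < MAJORITY n Y \/ complexity Y < complexity Z).
Proof. unfold sdom. rewrite Bool.andb_true_iff, wdom_iff, Bool.orb_true_iff, !Nat.ltb_lt. tauto. Qed.

Lemma wdom_front_vector n Y Z k :
  MAJORITY n Z = k -> complexity Z = vk k -> wdom n Y Z = true ->
  MAJORITY n Y = k /\ complexity Y = vk k.
Proof.
  intros H1 H2 H3. apply wdom_iff in H3. pose proof (MAJORITY_complexity n Y). unfold vk in *. lia.
Qed.

Lemma sdom_front_vector n Y Z k :
  MAJORITY n Y = k -> complexity Y = vk k -> sdom n Z Y = false.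
Proof.
  intros H1 H2. destruct (sdom n Z Y) eqn:E; auto. apply sdom_iff in E.
  pose proof (MAJORITY_complexity n Z). unfold vk in *. lia.
Qed.

(** The tree J(x_{m+1}, J(x_m, ... J(x_2, x_1))) realises the vector (m+1, 2m+1). *)
Fixpoint chain (m : nat) : tree :=
  match m with 0 => Leaf (Lit 1 true) | S m' => Join (Leaf (Lit (S m) true)) (chain m') end.

Lemma chain_vars m x : In x (leaves (chain m)) -> 1 <= var x <= S m.
Proof.
  induction m as [|m IH]; simpl.
  - intros [<-|[]]; simpl; lia.
  - intros [<-|H]; simpl; [lia|]. specialize (IH H); lia.
Qed.

Lemma chain_size m : size_t (chain m) = 2 * m + 1.
Proof. induction m; simpl; lia. Qed.

Lemma chain_majority n m : S m <= n -> S m <= MAJl n (leaves (chain m)).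
Proof.
  induction m as [|m IH]; intro Hm; simpl.
  - pose proof (MAJl_add_fresh n 1 [] ltac:(lia) eq_refl). lia.
  - assert (Hf : fresh (S (S m)) (leaves (chain m)) = true).
    { apply fresh_above. intros x Hx. apply chain_vars in Hx. lia. }
    pose proof (MAJl_add_fresh n (S (S m)) (leaves (chain m)) ltac:(lia) Hf).
    specialize (IH ltac:(lia)). lia.
Qed.

(** Pareto optimal trees lie on the front: otherwise [chain] (or the empty
    tree) dominates them. *)
Lemma pareto_opt_on_front n Y : pareto_opt n Y -> complexity Y = vk (MAJORITY n Y).
Proof.
  intro HpY. pose proof (MAJORITY_complexity n Y) as HM. pose proof (MAJORITY_le_n n Y) as Hk.
  unfold vk. destruct (Nat.eq_dec (complexity Y) (2 * MAJORITY n Y - 1)) as [E|E]; auto.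
  exfalso. apply HpY. destruct (MAJORITY n Y) as [|m] eqn:Ek.
  - exists None. split; [constructor|]. apply sdom_iff. rewrite Ek. simpl. lia.
  - exists (Some (chain m)). split.
    + unfold wf. simpl. apply Forall_forall. intros x Hx. apply chain_vars in Hx. lia.
    + apply sdom_iff. rewrite Ek, MAJORITY_leaf_list. simpl. rewrite chain_size.
      pose proof (chain_majority n m ltac:(lia)). lia.
Qed.

Lemma missing_front_vector n P : ~ covers_front n P -> exists k, k <= n /\ covb n P k = false.
Proof.
  intro H. apply NNPP. intro Hall. apply H. intros Y _ HpY.
  assert (Hk : MAJORITY n Y <= n) by apply MAJORITY_le_n.
  destruct (covb n P (MAJORITY n Y)) eqn:E; [|exfalso; eauto].
  apply covb_iff in E as [Z [HZ [H1 H2]]]. exists Z.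
  rewrite (pareto_opt_on_front n Y HpY). auto.
Qed.

Lemma first_gap n P k : covb n P 0 = true -> covb n P k = false ->
  exists j, 1 <= j <= k /\ covb n P (j - 1) = true /\ covb n P j = false.
Proof.
  intros H0. induction k as [|k IH]; intro Hk; [congruence|].
  destruct (covb n P k) eqn:E.
  - exists (S k). split; [lia|]. simpl. rewrite Nat.sub_0_r. auto.
  - destruct (IH eq_refl) as [j [Hj Hj']]. exists j. split; [lia|auto].
Qed.

Definition accepted n P Y := existsb (fun Z => sdom n Z Y) P = false.

Lemma accepted_intro n P Y : (forall Z, In Z P -> sdom n Z Y = false) -> accepted n P Y.
Proof.
  intro H. unfold accepted. destruct (existsb _ P) eqn:E; auto.
  apply existsb_exists in E as [Z [HZ HZ']]. rewrite H in HZ'; auto.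
Qed.

Lemma update_accepted n P Y : accepted n P Y -> In Y (update n P Y).
Proof. unfold accepted, update. intro H; rewrite H; left; auto. Qed.

Lemma update_keep n P Y Z : In Z P ->
  In Z (update n P Y) \/ (accepted n P Y /\ wdom n Y Z = true).
Proof.
  intro HZ. unfold update, accepted. destruct (existsb _ P) eqn:E; [left; auto|].
  destruct (wdom n Y Z) eqn:W; [right; auto|].
  left; right. apply filter_In. rewrite W; auto.
Qed.

Lemma covb_update_mono n P Y k : covb n P k = true -> covb n (update n P Y) k = true.
Proof.
  rewrite !covb_iff. intros [Z [HZ [H1 H2]]].
  destruct (update_keep n P Y Z HZ) as [H|[Ha Hw]]; [eauto|].
  exists Y. destruct (wdom_front_vector n Y Z k H1 H2 Hw). split; auto.
  apply update_accepted; auto.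
Qed.

(** An offspring on the front is always accepted. *)
Lemma covb_update_new n P Y k :
  MAJORITY n Y = k -> complexity Y = vk k -> covb n (update n P Y) k = true.
Proof.
  intros H1 H2. apply covb_iff. exists Y. split; auto. apply update_accepted, accepted_intro.
  intros; eapply sdom_front_vector; eauto.
Qed.

Lemma update_nonempty n P Y : P <> [] -> update n P Y <> [].
Proof. unfold update. destruct (existsb _ P); auto. discriminate. Qed.

Definition Inv n (P : list stree) := P <> [] /\ NoDup (map (MAJORITY n) P).

Lemma Inv_single n X : Inv n [X].
Proof. split; [discriminate|repeat constructor; intros []]. Qed.

Lemma NoDup_map_filter {A B} (f : A -> B) p l : NoDup (map f l) -> NoDup (map f (filter p l)).
Proof.
  induction l as [|x l IH]; simpl; auto. intro H. inversion H; subst.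
  destruct (p x); simpl; auto. constructor; auto.
  intro Hin. apply H2. apply in_map_iff in Hin as [y [Hy Hy']]. apply filter_In in Hy' as [Hy' _].
  rewrite <- Hy. apply in_map; auto.
Qed.

(** A member surviving next to an accepted Y is not weakly dominated by Y; if
    it had the same MAJORITY value it would strictly dominate Y.  Hence
    MAJORITY values stay distinct. *)
Lemma Inv_update n P Y : Inv n P -> Inv n (update n P Y).
Proof.
  intros [H1 H2]. split; [apply update_nonempty; auto|].
  unfold update. destruct (existsb _ P) eqn:E; auto.
  simpl. constructor; [|apply NoDup_map_filter; auto].
  intro Hin. apply in_map_iff in Hin as [Z [HZ HZ']]. apply filter_In in HZ' as [HZP HW].
  assert (sdom n Z Y = true).
  { apply Bool.negb_true_iff in HW. apply sdom_iff.
    assert (~ (MAJORITY n Z <= MAJORITY n Y /\ complexity Y <= complexity Z))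
      by (rewrite <- wdom_iff; congruence). lia. }
  assert (existsb (fun Z => sdom n Z Y) P = true) by (apply existsb_exists; eauto). congruence.
Qed.

Lemma Inv_length n P : Inv n P -> length P <= S n.
Proof.
  intros [_ H]. rewrite <- (length_map (MAJORITY n) P), <- (length_seq (S n) 0).
  apply NoDup_incl_length; auto. intros x Hx. apply in_map_iff in Hx as [Z [<- _]].
  apply in_seq. pose proof (MAJORITY_le_n n Z). lia.
Qed.

Fixpoint cmin (P : list stree) : nat :=
  match P with
  | [] => 0
  | [X] => complexity X
  | X :: P' => Nat.min (complexity X) (cmin P')
  end.

Lemma cmin_spec P : P <> [] ->
  (exists Z, In Z P /\ complexity Z = cmin P) /\ (forall Z, In Z P -> cmin P <= complexity Z).
Proof.
  induction P as [|X P IH]; intro HP; [congruence|].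
  destruct P as [|Y P'].
  - split; [exists X; simpl; auto|intros Z [<-|[]]; simpl; lia].
  - destruct (IH ltac:(discriminate)) as [[Z [HZ HZc]] Hmin].
    change (cmin (X :: Y :: P')) with (Nat.min (complexity X) (cmin (Y :: P'))).
    split.
    + destruct (Nat.le_ge_cases (complexity X) (cmin (Y :: P'))).
      * exists X. split; [left; auto|lia].
      * exists Z. split; [right; auto|lia].
    + intros Z' [<-|HZ']; [lia|]. specialize (Hmin Z' HZ'). lia.
Qed.

Lemma cmin_update_mono n P Y : P <> [] -> cmin (update n P Y) <= cmin P.
Proof.
  intro HP. destruct (cmin_spec P HP) as [[Z [HZ HZc]] _].
  destruct (cmin_spec (update n P Y) (update_nonempty n P Y HP)) as [_ H].
  destruct (update_keep n P Y Z HZ) as [H'|[Ha Hw]].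
  - rewrite <- HZc. apply H; auto.
  - apply wdom_iff in Hw. specialize (H Y (update_accepted n P Y Ha)). lia.
Qed.

Lemma cmin_update_decr n P Y : P <> [] -> complexity Y < cmin P -> cmin (update n P Y) < cmin P.
Proof.
  intros HP HY. destruct (cmin_spec P HP) as [_ H0].
  assert (Ha : accepted n P Y).
  { apply accepted_intro. intros Z HZ. specialize (H0 Z HZ).
    destruct (sdom n Z Y) eqn:E; auto. apply sdom_iff in E. lia. }
  destruct (cmin_spec (update n P Y) (update_nonempty n P Y HP)) as [_ H].
  specialize (H Y (update_accepted n P Y Ha)). lia.
Qed.

End Front.

(** * Mutation operators *)

Lemma hvl_ops_nnd n X : nnd (op_subst n X) /\ nnd (op_insert n X) /\ nnd (op_delete X).
Proof.
  repeat split; destruct X; cbn [op_subst op_insert op_delete];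
    repeat first [apply nnd_ret | apply nnd_bind; [apply nnd_uniform|intro]].
Qed.

Lemma hvl_ops_mass n X :
  mass (op_subst n X) <= 1 /\ mass (op_insert n X) <= 1 /\ mass (op_delete X) <= 1.
Proof.
  repeat split; destruct X; cbn [op_subst op_insert op_delete];
    repeat first [rewrite mass_ret; lra
                 | apply mass_bind; [apply nnd_uniform|apply mass_uniform|intro]].
Qed.

Lemma hvl_nnd n X : nnd (hvl n X).
Proof.
  destruct (hvl_ops_nnd n X) as [H1 [H2 H3]]. unfold hvl.
  repeat apply nnd_app; apply nnd_scale; auto; lra.
Qed.

Lemma hvl_mass n X : mass (hvl n X) <= 1.
Proof.
  destruct (hvl_ops_mass n X) as [H1 [H2 H3]].
  unfold hvl, mass in *. rewrite !expect_app, !expect_scale. lra.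
Qed.

Lemma hvl_ge_insert n X f :
  (forall y, 0 <= f y) -> / 3 * expect (op_insert n X) f <= expect (hvl n X) f.
Proof.
  intro Hf. destruct (hvl_ops_nnd n X) as [H1 [H2 H3]].
  unfold hvl. rewrite !expect_app, !expect_scale.
  pose proof (expect_nonneg _ f H1 Hf). pose proof (expect_nonneg _ f H3 Hf). lra.
Qed.

Lemma hvl_ge_delete n X f :
  (forall y, 0 <= f y) -> / 3 * expect (op_delete X) f <= expect (hvl n X) f.
Proof.
  intro Hf. destruct (hvl_ops_nnd n X) as [H1 [H2 H3]].
  unfold hvl. rewrite !expect_app, !expect_scale.
  pose proof (expect_nonneg _ f H1 Hf). pose proof (expect_nonneg _ f H2 Hf). lra.
Qed.

(** A mutation kernel is admissible if it is a subdistribution that performs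
    a single HVL-Prime step with probability at least 1/e.  Only these
    properties of the kernel enter the drift analysis. *)
Definition admissible (n : nat) (mut : stree -> Defs.dist stree) : Prop :=
  (forall X, nnd (mut X)) /\ (forall X, mass (mut X) <= 1) /\
  (forall X f, (forall y, 0 <= f y) -> exp (-1) * expect (hvl n X) f <= expect (mut X) f).

Lemma exp_m1 : exp (-1) = / exp 1.
Proof. rewrite <- exp_Ropp. f_equal. Qed.

Lemma exp_m1_pos : 0 < exp (-1).
Proof. apply exp_pos. Qed.

Lemma exp_m1_le_1 : exp (-1) <= 1.
Proof. rewrite <- exp_0. left; apply exp_increasing; lra. Qed.

Lemma mut_single_admissible n : admissible n (mut_single n).
Proof.
  split; [apply hvl_nnd|split; [apply hvl_mass|]].
  intros X f Hf. unfold mut_single. pose proof exp_m1_le_1.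
  assert (0 <= expect (hvl n X) f) by (apply expect_nonneg; auto; apply hvl_nnd). nra.
Qed.

Lemma hvl_iter_nnd n k X : nnd (hvl_iter n k X).
Proof.
  revert X; induction k; intro X; cbn [hvl_iter]; [apply nnd_ret|].
  apply nnd_bind; [apply hvl_nnd|auto].
Qed.

Lemma hvl_iter_mass n k X : mass (hvl_iter n k X) <= 1.
Proof.
  revert X; induction k; intro X; cbn [hvl_iter]; [rewrite mass_ret; lra|].
  apply mass_bind; [apply hvl_nnd|apply hvl_mass|auto].
Qed.

Lemma exp_partial_sum K : sumf (seq 0 K) (fun j => / INR (fact j)) <= exp 1.
Proof.
  assert (Hsum : forall m, sumf (seq 0 (S m)) (fun j => / INR (fact j)) =
                           sum_f_R0 (fun i => / INR (fact i) * 1 ^ i) m).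
  { induction m.
    - simpl. lra.
    - rewrite seq_S, sumf_app, IHm. cbn [sum_f_R0]. rewrite pow1. simpl. lra. }
  destruct K as [|K]; [simpl; left; apply exp_pos|]. rewrite Hsum.
  apply (growing_ineq (fun k => sum_f_R0 (fun i => / INR (fact i) * 1 ^ i) k)).
  - intro m. cbn [sum_f_R0]. rewrite pow1.
    pose proof (Rinv_0_lt_compat _ (INR_fact_lt_0 (S m))). lra.
  - unfold exp. destruct (exist_exp 1) as [l H]. exact H.
Qed.

Lemma poisson_weight_nonneg j : 0 <= exp (-1) / INR (fact j).
Proof.
  pose proof exp_m1_pos. pose proof (Rinv_0_lt_compat _ (INR_fact_lt_0 j)).
  unfold Rdiv. nra.
Qed.

Lemma mut_multi_nnd n K X : nnd (mut_multi_trunc n K X).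
Proof.
  unfold mut_multi_trunc. induction (seq 0 K); cbn [flat_map]; [constructor|].
  apply nnd_app; auto. apply nnd_scale; [apply poisson_weight_nonneg|apply hvl_iter_nnd].
Qed.

(** The truncated Poisson weights sum to at most e^{-1} * e = 1. *)
Lemma mut_multi_mass n K X : mass (mut_multi_trunc n K X) <= 1.
Proof.
  unfold mass, mut_multi_trunc. rewrite expect_flat_map.
  apply Rle_trans with (sumf (seq 0 K) (fun j => exp (-1) * / INR (fact j))).
  - apply sumf_mono. intros j _. rewrite expect_scale. fold (mass (hvl_iter n (S j) X)).
    pose proof (hvl_iter_mass n (S j) X). pose proof (poisson_weight_nonneg j).
    unfold Rdiv in *. nra.
  - rewrite sumf_scal, exp_m1. pose proof (exp_pos 1).
    apply Rle_trans with (/ exp 1 * exp 1); [|rewrite Rinv_l; lra].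
    apply Rmult_le_compat_l; [left; apply Rinv_0_lt_compat; lra|apply exp_partial_sum].
Qed.

(** With probability e^{-1}/0! the multi-operation mutation performs exactly
    one HVL-Prime step. *)
Lemma mut_multi_ge_hvl n K X f : (1 <= K)%nat -> (forall y, 0 <= f y) ->
  exp (-1) * expect (hvl n X) f <= expect (mut_multi_trunc n K X) f.
Proof.
  intros HK Hf. destruct K as [|K]; [lia|]. unfold mut_multi_trunc. rewrite expect_flat_map.
  cbn [seq sumf fold_right]. rewrite expect_scale.
  fold (sumf (seq 1 K)
          (fun j => expect (scale (exp (-1) / INR (fact j)) (hvl_iter n (S j) X)) f)).
  assert (0 <= sumf (seq 1 K)
                 (fun j => expect (scale (exp (-1) / INR (fact j)) (hvl_iter n (S j) X)) f)).
  { apply sumf_nonneg. intros j _. apply expect_nonneg; auto.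
    apply nnd_scale; [apply poisson_weight_nonneg|apply hvl_iter_nnd]. }
  assert (E : expect (hvl_iter n 1 X) f = expect (hvl n X) f).
  { simpl. rewrite expect_bind. apply expect_ext. intro; apply expect_ret. }
  rewrite E. simpl (INR (fact 0)). unfold Rdiv. rewrite Rinv_1, Rmult_1_r. lra.
Qed.

Lemma mut_multi_admissible n K : (1 <= K)%nat -> admissible n (mut_multi_trunc n K).
Proof.
  intro HK. split; [|split]; intros.
  - apply mut_multi_nnd.
  - apply mut_multi_mass.
  - apply mut_multi_ge_hvl; auto.
Qed.

(** * The potential *)

Definition Aw (n : nat) : R := 3 * exp 1 * INR (S n).
Definition w (n j : nat) : R := 6 * exp 1 * INR n * INR (S n) / INR (S n - j).

Definition uncovered (n : nat) (P : list stree) : R :=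
  sumf (seq 1 n) (fun j => if covb n P j then 0 else w n j).

Definition potential (n : nat) (P : list stree) : R := Aw n * INR (cmin P) + uncovered n P.

Lemma Aw_pos n : 0 < Aw n.
Proof.
  unfold Aw. pose proof (exp_pos 1). assert (0 < INR (S n)) by (apply lt_0_INR; lia). nra.
Qed.

Lemma w_pos n j : (1 <= j <= n)%nat -> 0 < w n j.
Proof.
  intro H. unfold w. pose proof (exp_pos 1).
  assert (0 < INR (S n - j)) by (apply lt_0_INR; lia).
  assert (0 < INR n) by (apply lt_0_INR; lia).
  assert (0 < INR (S n)) by (apply lt_0_INR; lia).
  apply Rdiv_lt_0_compat; auto. repeat apply Rmult_lt_0_compat; lra.
Qed.

Lemma uncovered_summand_mono n P Y j : (1 <= j <= n)%nat ->
  (if covb n (update n P Y) j then 0 else w n j) <= (if covb n P j then 0 else w n j).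
Proof.
  intro Hj. destruct (covb n P j) eqn:E.
  - rewrite (covb_update_mono n P Y j E). lra.
  - destruct (covb n (update n P Y) j); [left; apply w_pos; lia|lra].
Qed.

Lemma uncovered_nonneg n P : 0 <= uncovered n P.
Proof.
  apply sumf_nonneg. intros j Hj. apply in_seq in Hj. destruct (covb n P j); [lra|].
  left; apply w_pos; lia.
Qed.

Lemma uncovered_update_mono n P Y : uncovered n (update n P Y) <= uncovered n P.
Proof. apply sumf_mono. intros j Hj. apply in_seq in Hj. apply uncovered_summand_mono. lia. Qed.

Lemma uncovered_update_drop n P Y j : (1 <= j <= n)%nat ->
  covb n P j = false -> covb n (update n P Y) j = true ->
  uncovered n (update n P Y) + w n j <= uncovered n P.
Proof.
  intros Hj H1 H2. apply sumf_drop with (z := j).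
  - intros i Hi. apply in_seq in Hi. apply uncovered_summand_mono. lia.
  - apply in_seq; lia.
  - rewrite H1, H2. lra.
Qed.

Lemma potential_nonneg n P : 0 <= potential n P.
Proof.
  unfold potential. pose proof (Aw_pos n). pose proof (pos_INR (cmin P)).
  pose proof (uncovered_nonneg n P). nra.
Qed.

Lemma potential_update_mono n P Y : P <> [] -> potential n (update n P Y) <= potential n P.
Proof.
  intro HP. unfold potential. pose proof (Aw_pos n). pose proof (uncovered_update_mono n P Y).
  pose proof (le_INR _ _ (cmin_update_mono n P Y HP)). nra.
Qed.

(** * Success probabilities of insertion *)

Definition fresh_positive n l (u : lit) : bool :=
  (Defs.pos u && Nat.leb 1 (var u) && Nat.leb (var u) n && fresh (var u) l)%bool.

Lemma Tset_length n : length (Tset n) = (2 * n)%nat.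
Proof.
  unfold Tset. rewrite <- (length_seq n 1) at 2. generalize (seq 1 n).
  induction l; simpl; auto. rewrite IHl. lia.
Qed.

Lemma fresh_positive_count n l : (n - length l <= length (filter (fresh_positive n l) (Tset n)))%nat.
Proof.
  assert (Hgen : forall s, (forall i, In i s -> 1 <= i <= n)%nat ->
            (length (filter (fun i => fresh i l) s) <=
             length (filter (fresh_positive n l) (flat_map (fun i => [Lit i true; Lit i false]) s)))%nat).
  { induction s as [|a s IH]; intro H; simpl; [lia|].
    assert (Ha : (1 <= a <= n)%nat) by (apply H; left; auto).
    assert (IH' := IH (fun i Hi => H i (or_intror Hi))).
    assert (E : fresh_positive n l (Lit a true) = fresh a l).
    { unfold fresh_positive. cbn [var Defs.pos].
      replace (Nat.leb 1 a) with true by (symmetry; apply Nat.leb_le; lia).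
      replace (Nat.leb a n) with true by (symmetry; apply Nat.leb_le; lia). reflexivity. }
    cbn [flat_map app filter]. rewrite E. destruct (fresh a l); cbn [length fresh_positive]; lia. }
  pose proof (fresh_count n l).
  assert (H' : (length (filter (fun i => fresh i l) (seq 1 n)) <=
                length (filter (fresh_positive n l) (Tset n)))%nat)
    by (apply Hgen; intros i Hi; apply in_seq in Hi; lia).
  lia.
Qed.

Lemma front_tree_leaves n Z j : MAJORITY n Z = (j - 1)%nat -> complexity Z = vk (j - 1) ->
  (1 <= j)%nat -> length (leaf_list Z) = (j - 1)%nat.
Proof.
  intros H1 H2 Hj. destruct Z as [t|]; simpl in *.
  - pose proof (size_leaves t). unfold vk in H2. destruct t; simpl in *; lia.
  - pose proof (MAJl_le_length n []). rewrite MAJORITY_leaf_list in H1. simpl in *. lia.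
Qed.

Lemma fresh_insert_covers n P Z Y u j : MAJORITY n Z = (j - 1)%nat -> (1 <= j <= n)%nat ->
  fresh_positive n (leaf_list Z) u = true -> Permutation (leaf_list Y) (u :: leaf_list Z) ->
  complexity Y = vk j -> covb n (update n P Y) j = true.
Proof.
  intros H1 Hj Hg Hp HC. destruct u as [i b]. unfold fresh_positive in Hg. cbn [var Defs.pos] in Hg.
  apply andb_prop in Hg as [Hg Hf]; apply andb_prop in Hg as [Hg Hn']; apply andb_prop in Hg as [Hb H0].
  subst b. apply Nat.leb_le in H0, Hn'.
  apply covb_update_new; auto.
  pose proof (MAJl_add_fresh n i (leaf_list Z) ltac:(lia) Hf) as H3.
  rewrite <- MAJORITY_leaf_list, H1 in H3.
  pose proof (MAJORITY_complexity n Y) as H4.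
  rewrite !MAJORITY_leaf_list, (MAJl_perm n _ _ Hp) in *. rewrite HC in H4. unfold vk in H4. lia.
Qed.

(** Insertion into a tree on front vector j-1 covers vector j with probability
    >= (n+1-j)/(2n): whatever node is chosen, a fresh positive literal works. *)
Lemma insert_covers_next n P Z j : MAJORITY n Z = (j - 1)%nat -> complexity Z = vk (j - 1) ->
  (1 <= j <= n)%nat ->
  INR (S n - j) * / INR (2 * n) <=
  expect (op_insert n Z) (fun Y => if covb n (update n P Y) j then 1 else 0).
Proof.
  intros H1 H2 Hj.
  pose proof (front_tree_leaves n Z j H1 H2 ltac:(lia)) as HL.
  pose proof (fresh_positive_count n (leaf_list Z)) as HC. rewrite HL in HC.
  assert (Hfreq : INR (S n - j) * / INR (2 * n) <=
          INR (length (filter (fresh_positive n (leaf_list Z)) (Tset n))) * / INR (length (Tset n))).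
  { rewrite Tset_length. apply Rmult_le_compat_r; [apply inv_INR_nonneg|apply le_INR; lia]. }
  eapply Rle_trans; [exact Hfreq|]. clear Hfreq.
  assert (Hind : forall y, 0 <= (if covb n (update n P y) j then 1 else 0))
    by (intro; destruct (covb _ _ _); lra).
  destruct Z as [t|]; cbn [op_insert]; rewrite expect_bind.
  - apply uniform_ge_all; [destruct t; discriminate|].
    intros i Hi. apply in_seq in Hi. rewrite expect_bind. apply uniform_ge_count.
    + intro; apply expect_nonneg; auto.
      repeat first [apply nnd_ret | apply nnd_bind; [apply nnd_uniform|intro]].
    + intros u Hu. rewrite expect_bind. apply uniform_ge_all; [discriminate|].
      intros ul _. rewrite expect_ret.
      destruct (insert_spec t i u ul ltac:(lia)) as [Hs Hp].
      rewrite (fresh_insert_covers n P (Some t) (Some (insert_at t i u ul)) u j); auto; [lra|].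
      simpl complexity. rewrite Hs. simpl in H2. unfold vk in *.
      pose proof (size_leaves t). simpl in HL. lia.
  - apply uniform_ge_count; [intro; rewrite expect_ret; auto|].
    intros u Hu. rewrite expect_ret.
    rewrite (fresh_insert_covers n P None (Some (Leaf u)) u j); auto; [lra|].
    simpl in HL |- *. unfold vk. lia.
Qed.

(** * Additive drift *)

Lemma event_drift {A} (D : Defs.dist A) h G d p (b : A -> bool) :
  nnd D -> mass D <= 1 -> 0 <= G -> 0 <= d ->
  (forall Y, h Y <= G - d * (if b Y then 1 else 0)) ->
  p <= expect D (fun Y => if b Y then 1 else 0) -> 1 <= d * p -> 1 + expect D h <= G.
Proof.
  intros Hn Hm HG Hd Hh Hp Hdp.
  pose proof (expect_mono D h _ Hn Hh) as H. rewrite expect_affine in H.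
  assert (0 <= mass D) by (apply expect_nonneg; auto; intros; lra).
  nra.
Qed.

Lemma sumR_shift (N : nat) (f : nat -> R) : sumR (S N) f = f 0%nat + sumR N (fun t => f (S t)).
Proof.
  change (sumf (seq 0 (S N)) f = f 0%nat + sumf (seq 0 N) (fun t => f (S t))).
  cbn [seq]. simpl. rewrite <- seq_shift, sumf_map. reflexivity.
Qed.

Section Drift.
Variable n : nat.
Variable mut : stree -> Defs.dist stree.
Hypothesis n_pos : (1 <= n)%nat.
Hypothesis mut_admissible : admissible n mut.

Definition offspring (P : list stree) : Defs.dist stree := bind (uniform P) mut.

Lemma offspring_nnd P : nnd (offspring P).
Proof. apply nnd_bind; [apply nnd_uniform|apply mut_admissible]. Qed.

Lemma offspring_mass P : mass (offspring P) <= 1.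
Proof. apply mass_bind; [apply nnd_uniform|apply mass_uniform|apply mut_admissible]. Qed.

(** Selecting Z (probability >= 1/(n+1)) and then mutating it by a single
    HVL-Prime step (probability >= 1/e). *)
Lemma offspring_ge_hvl P Z f : Inv n P -> In Z P -> (forall y, 0 <= f y) ->
  / INR (S n) * (exp (-1) * expect (hvl n Z) f) <= expect (offspring P) f.
Proof.
  intros HI HZ Hf. unfold offspring. rewrite expect_bind.
  eapply Rle_trans; [|apply (uniform_ge_one P (fun Z => expect (mut Z) f) Z (S n))].
  - apply Rmult_le_compat_l; [apply inv_INR_nonneg|apply mut_admissible; auto].
  - intro; apply expect_nonneg; auto; apply mut_admissible.
  - exact HZ.
  - apply Inv_length; auto.
Qed.

(** Phase 1 (cmin > 0): deleting any leaf of a tree of minimal complexity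
    lowers cmin, which lowers the potential by Aw. *)
Lemma drift_delete P : Inv n P -> (1 <= cmin P)%nat ->
  1 + expect (offspring P) (fun Y => potential n (update n P Y)) <= potential n P.
Proof.
  intros HI Hc. pose proof HI as [HP _].
  destruct (cmin_spec P HP) as [[[t|] [HZ HZc]] _]; [|simpl in HZc; lia].
  set (b := fun Y => Nat.ltb (cmin (update n P Y)) (cmin P)).
  apply (event_drift _ _ _ (Aw n) (/ INR (S n) * (exp (-1) * (/ 3 * 1))) b).
  - apply offspring_nnd.
  - apply offspring_mass.
  - apply potential_nonneg.
  - left; apply Aw_pos.
  - intro Y. unfold b. destruct (Nat.ltb _ _) eqn:E.
    + apply Nat.ltb_lt in E. unfold potential. pose proof (uncovered_update_mono n P Y).
      assert (INR (cmin (update n P Y)) + 1 <= INR (cmin P)) by (rewrite <- S_INR; apply le_INR; lia).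
      pose proof (Aw_pos n). nra.
    + pose proof (potential_update_mono n P Y HP). lra.
  - assert (Hb : forall y, 0 <= (if b y then 1 else 0)) by (intro y; destruct (b y); lra).
    eapply Rle_trans; [|apply (offspring_ge_hvl P (Some t)); auto].
    apply Rmult_le_compat_l; [apply inv_INR_nonneg|].
    apply Rmult_le_compat_l; [left; apply exp_pos|].
    eapply Rle_trans; [|apply hvl_ge_delete; auto].
    apply Rmult_le_compat_l; [lra|].
    cbn [op_delete]. rewrite expect_bind. apply uniform_ge_all.
    + pose proof (nleaves_pos t). destruct (nleaves t); [lia|discriminate].
    + intros i _. rewrite expect_ret. unfold b.
      replace (Nat.ltb (cmin (update n P (delete_at t i))) (cmin P)) with true; [lra|].
      symmetry. apply Nat.ltb_lt, cmin_update_decr; auto. rewrite <- HZc. apply delete_smaller.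
  - unfold Aw. pose proof (exp_pos 1). rewrite exp_m1.
    assert (0 < INR (S n)) by (apply lt_0_INR; lia).
    right. field. split; lra.
Qed.

(** Phase 2 (cmin = 0, so the empty tree covers vector 0): at the first
    uncovered vector j, insertion into the tree on vector j-1 covers j,
    which lowers the potential by w_j. *)
Lemma drift_insert P : Inv n P -> cmin P = 0%nat -> ~ covers_front n P ->
  1 + expect (offspring P) (fun Y => potential n (update n P Y)) <= potential n P.
Proof.
  intros HI Hc Hnc. pose proof HI as [HP _].
  destruct (cmin_spec P HP) as [[Z0 [HZ0 HZ0c]] _].
  assert (H0 : covb n P 0 = true).
  { apply covb_iff. exists Z0. pose proof (MAJORITY_complexity n Z0). rewrite HZ0c, Hc in *.
    unfold vk. split; auto. split; lia. }
  destruct (missing_front_vector n P Hnc) as [k [Hk Hk']].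
  destruct (first_gap n P k H0 Hk') as [j [Hj [Hj1 Hj2]]].
  apply covb_iff in Hj1 as [Z [HZ [HZm HZc]]].
  set (b := fun Y => covb n (update n P Y) j).
  apply (event_drift _ _ _ (w n j)
     (/ INR (S n) * (exp (-1) * (/ 3 * (INR (S n - j) * / INR (2 * n))))) b).
  - apply offspring_nnd.
  - apply offspring_mass.
  - apply potential_nonneg.
  - left; apply w_pos; lia.
  - intro Y. unfold b. destruct (covb n (update n P Y) j) eqn:E.
    + unfold potential. pose proof (uncovered_update_drop n P Y j ltac:(lia) Hj2 E).
      pose proof (le_INR _ _ (cmin_update_mono n P Y HP)). pose proof (Aw_pos n). nra.
    + pose proof (potential_update_mono n P Y HP). lra.
  - assert (Hb : forall y, 0 <= (if b y then 1 else 0)) by (intro y; destruct (b y); lra).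
    eapply Rle_trans; [|apply (offspring_ge_hvl P Z); auto].
    apply Rmult_le_compat_l; [apply inv_INR_nonneg|].
    apply Rmult_le_compat_l; [left; apply exp_pos|].
    eapply Rle_trans; [|apply hvl_ge_insert; auto].
    apply Rmult_le_compat_l; [lra|].
    apply insert_covers_next; auto. lia.
  - unfold w. pose proof (exp_pos 1).
    rewrite exp_m1, mult_INR.
    assert (0 < INR (S n)) by (apply lt_0_INR; lia).
    assert (0 < INR n) by (apply lt_0_INR; lia).
    assert (0 < INR (S n - j)) by (apply lt_0_INR; lia).
    right. simpl (INR 2). field. repeat split; lra.
Qed.

Lemma potential_drift P : Inv n P -> ~ covers_front n P ->
  1 + expect (offspring P) (fun Y => potential n (update n P Y)) <= potential n P.
Proof.
  intros HI Hnc. destruct (cmin P) eqn:E.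
  - apply drift_insert; auto.
  - apply drift_delete; auto. lia.
Qed.

Lemma not_done_step t P : covers_frontb n P = false ->
  not_done mut n (S t) P = expect (offspring P) (fun Y => not_done mut n t (update n P Y)).
Proof. intro E. simpl. rewrite E. reflexivity. Qed.

Lemma not_done_covered t P : covers_frontb n P = true -> not_done mut n t P = 0.
Proof. intro E. destruct t; simpl; rewrite E; reflexivity. Qed.

Theorem drift_bound N : forall P, Inv n P -> sumR N (fun t => not_done mut n t P) <= potential n P.
Proof.
  induction N as [|N IH]; intros P HI; [apply potential_nonneg|].
  rewrite sumR_shift. change (sumR N ?f) with (sumf (seq 0 N) f).
  destruct (covers_frontb n P) eqn:E.
  - rewrite (not_done_covered 0 P E), (sumf_ext _ _ (fun _ => 0)), sumf_zero
      by (intro; apply not_done_covered; auto).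
    pose proof (potential_nonneg n P). lra.
  - assert (Hnc : ~ covers_front n P).
    { unfold covers_frontb in E. destruct (excluded_middle_informative _); congruence. }
    replace (not_done mut n 0 P) with 1 by (simpl; rewrite E; reflexivity).
    rewrite (sumf_ext _ _ _ (fun t => not_done_step t P E)), sumf_expect.
    pose proof (potential_drift P HI Hnc).
    assert (expect (offspring P) (fun Y => sumf (seq 0 N) (fun t => not_done mut n t (update n P Y)))
            <= expect (offspring P) (fun Y => potential n (update n P Y))).
    { apply expect_mono; [apply offspring_nnd|]. intro Y. apply IH, Inv_update; auto. }
    lra.
Qed.

End Drift.

(** * The initial potential *)

(** The harmonic number H_m, summed as 1/m + ... + 1/1. *)
Definition harmonic (m : nat) : R := sumf (seq 1 m) (fun j => / INR (S m - j)).

Lemma harmonic_S m : harmonic (S m) = / INR (S m) + harmonic m.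
Proof.
  unfold harmonic. cbn [seq sumf fold_right]. f_equal.
  rewrite <- seq_shift. fold (sumf (map S (seq 1 m)) (fun j => / INR (S (S m) - j))).
  rewrite sumf_map. reflexivity.
Qed.

(** 1/(m+1) <= ln(m+1) - ln m, from 1 + x <= e^x at x = -1/(m+1). *)
Lemma inv_le_ln_diff m : (1 <= m)%nat -> / INR (S m) <= ln (INR (S m)) - ln (INR m).
Proof.
  intro Hm1. assert (0 < INR m) by (apply lt_0_INR; lia).
  rewrite S_INR.
  assert (H1 : INR m / (INR m + 1) <= exp (- / (INR m + 1))).
  { pose proof (exp_ineq1_le (- / (INR m + 1))).
    replace (INR m / (INR m + 1)) with (1 + - / (INR m + 1)); [lra|field; lra]. }
  assert (H2 : ln (INR m / (INR m + 1)) = ln (INR m) - ln (INR m + 1)).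
  { unfold Rdiv. rewrite ln_mult, ln_Rinv; try lra. apply Rinv_0_lt_compat; lra. }
  destruct (Rle_or_lt (ln (INR m / (INR m + 1))) (- / (INR m + 1))) as [H3|H3]; [lra|].
  apply exp_increasing in H3. rewrite exp_ln in H3; [lra|].
  apply Rdiv_lt_0_compat; lra.
Qed.

Lemma harmonic_le_ln m : (1 <= m)%nat -> harmonic m <= 1 + ln (INR m).
Proof.
  induction m as [|[|m] IH]; intro H; [lia| |].
  - unfold harmonic. simpl. rewrite ln_1. lra.
  - rewrite harmonic_S. pose proof (IH ltac:(lia)). pose proof (inv_le_ln_diff (S m) ltac:(lia)). lra.
Qed.

Lemma harmonic_nonneg m : 0 <= harmonic m.
Proof. apply sumf_nonneg. intros. apply inv_INR_nonneg. Qed.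

Lemma uncovered_le_harmonic n P : uncovered n P <= 6 * exp 1 * INR n * INR (S n) * harmonic n.
Proof.
  unfold uncovered, harmonic. rewrite <- sumf_scal.
  apply sumf_mono. intros j Hj. apply in_seq in Hj.
  destruct (covb n P j); [|unfold w; lra].
  left. apply (w_pos n j). lia.
Qed.

Lemma ln_ge_half n : (2 <= n)%nat -> / 2 <= ln (INR n).
Proof.
  intro Hn. assert (Hn2 : 2 <= INR n) by (replace 2 with (INR 2) by (simpl; lra); apply le_INR; auto).
  pose proof ln_lt_2. destruct (Req_dec (INR n) 2) as [E|E]; [rewrite E; lra|].
  pose proof (ln_increasing 2 (INR n) ltac:(lra) ltac:(lra)). lra.
Qed.

Lemma potential_initial_bound n X0 : (2 <= n)%nat ->
  potential n [X0] <= 200 * (INR n * INR (complexity X0) + INR n ^ 2 * ln (INR n)).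
Proof.
  intro Hn. unfold potential. change (cmin [X0]) with (complexity X0).
  pose proof (uncovered_le_harmonic n [X0]). pose proof (harmonic_le_ln n ltac:(lia)).
  pose proof (harmonic_nonneg n). pose proof (ln_ge_half n Hn).
  pose proof exp_le_3. pose proof (exp_pos 1).
  assert (Hn2 : 2 <= INR n) by (replace 2 with (INR 2) by (simpl; lra); apply le_INR; auto).
  pose proof (pos_INR (complexity X0)).
  unfold Aw in *. rewrite S_INR in *.
  set (x := INR n) in *. set (C := INR (complexity X0)) in *. set (L := ln x) in *.
  set (h := harmonic n) in *.
  assert (A1 : 3 * exp 1 * (x + 1) * C <= 18 * x * C) by (apply Rmult_le_compat_r; nra).
  assert (A2 : 6 * exp 1 * x * (x + 1) <= 36 * x * x) by nra.
  assert (A3 : 6 * exp 1 * x * (x + 1) * h <= 36 * x * x * (3 * L)).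
  { apply Rle_trans with (36 * x * x * h); [apply Rmult_le_compat_r; auto|].
    apply Rmult_le_compat_l; nra. }
  simpl pow. nra.
Qed.

(** With the degenerate truncation K = 0 the kernel is empty, so only the
    event T > 0 contributes. *)
Lemma empty_kernel_bound n N P : sumR N (fun t => not_done (mut_multi_trunc n 0) n t P) <= 1.
Proof.
  destruct N as [|N]; [unfold sumR; simpl; lra|].
  assert (Hzero : forall t, not_done (mut_multi_trunc n 0) n (S t) P = 0).
  { intro t. simpl. destruct (covers_frontb n P); [reflexivity|].
    rewrite expect_bind. rewrite <- (expect_zero (uniform P)). apply expect_ext. reflexivity. }
  rewrite sumR_shift. change (sumR N ?f) with (sumf (seq 0 N) f).
  rewrite (sumf_ext _ _ (fun _ => 0)), sumf_zero by apply Hzero.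
  simpl. destruct (covers_frontb n P); lra.
Qed.

Theorem theorem5 :
  exists c : R, 0 < c /\
    forall n : nat, (2 <= n)%nat ->
    forall X0 : stree, wf n X0 ->
      let B := c * (INR n * INR (complexity X0) + INR n ^ 2 * ln (INR n)) in
      (forall N : nat, sumR N (fun t => not_done (mut_single n) n t (X0 :: nil)) <= B) /\
      (forall K N : nat, sumR N (fun t => not_done (mut_multi_trunc n K) n t (X0 :: nil)) <= B).
Proof.
  exists 200. split; [lra|]. intros n Hn X0 _ B.
  pose proof (potential_initial_bound n X0 Hn) as Hg. fold B in Hg.
  split.
  - intro N. eapply Rle_trans; [|exact Hg].
    apply drift_bound; [lia|apply mut_single_admissible|apply Inv_single].
  - intros [|K] N.
    + assert (HB : 1 <= B).
      { unfold B. pose proof (ln_ge_half n Hn). pose proof (pos_INR (complexity X0)).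
        assert (2 <= INR n) by (replace 2 with (INR 2) by (simpl; lra); apply le_INR; auto).
        simpl pow. nra. }
      pose proof (empty_kernel_bound n N [X0]). lra.
    + eapply Rle_trans; [|exact Hg].
      apply drift_bound; [lia|apply mut_multi_admissible; lia|apply Inv_single].
Qed.
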